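(* Let $\mu$ be a subadditive capacity on $(\Omega,\mathcal{F})$ which is continuous from above, and let $\{X_n\}_{n\in\mathbb{N}}$, $X$, $Y$, $Z$ be real-valued random variables with $Y\le X_n\le Z$ for all $n$ and with $\int_\Omega Y\, d\mu$ and $\int_\Omega Z\, d\mu$ finite. If $\bar{\mu}(\{\omega:\ \lim_{n\to\infty}X_n(\omega)= X(\omega)\})=1$, then $\lim_{n\to\infty}\int_\Omega X_n\, d\mu=\int_\Omega X\, d\mu$.
   Context: A capacity is $\mu:\mathcal{F}\to[0,1]$ with $\mu(\emptyset)=0$, $\mu(\Omega)=1$, monotone; subadditive if $\mu(A\cup B)\le\mu(A)+\mu(B)$ for disjoint $A,B$; continuous from above if $\mu(A_n)\to\mu(A)$ whenever $A_n\downarrow A$. The conjugate is $\bar{\mu}(A)=1-\mu(A^c)$. Choquet integral: $\int_{\Omega}\xi\, d\mu=\int_{0}^{\infty}\mu(\{\xi\ge t\})\,dt+\int_{-\infty}^0[\mu(\{\xi\ge t\})-1]\,dt$. *)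

From HB Require Import structures.
From mathcomp Require Import all_boot all_order all_algebra.
From mathcomp Require Import all_classical all_reals all_analysis.
Set Implicit Arguments. Unset Strict Implicit. Unset Printing Implicit Defensive.
Import Order.TTheory GRing.Theory Num.Theory.
Import numFieldNormedType.Exports.
Local Open Scope classical_set_scope.
Local Open Scope ring_scope.

Definition is_capacity d (T : measurableType d) (R : realType) (mu : set T -> R) : Prop :=
  [/\ mu set0 = 0, mu setT = 1,
      (forall A, measurable A -> 0 <= mu A <= 1) &
      (forall A B, measurable A -> measurable B -> A `<=` B -> mu A <= mu B)].

Definition cap_subadditive d (T : measurableType d) (R : realType) (mu : set T -> R) : Prop :=
  forall A B, measurable A -> measurable B -> A `&` B = set0 ->
    mu (A `|` B) <= mu A + mu B.

Definition cap_cont_from_above d (T : measurableType d) (R : realType) (mu : set T -> R) : Prop :=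
  forall A : nat -> set T, (forall n, measurable (A n)) ->
    (forall n, A n.+1 `<=` A n) ->
    mu (A n) @[n --> \oo] --> mu (\bigcap_n A n).

Definition conj_cap d (T : measurableType d) (R : realType) (mu : set T -> R)
  (A : set T) : R := 1 - mu (~` A).

Definition choquet d (T : measurableType d) (R : realType) (mu : set T -> R)
  (xi : T -> R) : \bar R :=
  ((\int[@lebesgue_measure R]_(t in `[0%R, +oo[%classic)
       (mu [set w | t <= xi w])%:E) +
   (\int[@lebesgue_measure R]_(t in `]-oo, 0%R[%classic)
       (mu [set w | t <= xi w] - 1)%:E))%E.

From HB Require Import structures.
From mathcomp Require Import all_boot all_order all_algebra.
From mathcomp Require Import all_classical all_reals all_analysis.
From mathcomp Require Import measurable_realfun lra.
Import Order.TTheory GRing.Theory Num.Theory.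
Import numFieldNormedType.Exports.
Local Open Scope classical_set_scope.
Local Open Scope ring_scope.

(* Both halves of the Choquet integral are Lebesgue integrals of the survival
   function t |-> mu [set w | t <= f w].  At every t where the survival
   function of X is right-continuous, those of the X_n converge to it:
   continuity from above applied to the sets where X_k >= t for some, resp.
   all, k >= n, together with subadditivity to discard the mu-null set where
   X_n does not converge to X.  A monotone function is right-continuous off a
   countable, hence Lebesgue-null, set, and the survival functions of Y and Z
   dominate those of the X_n, so dominated convergence applies on both
   half-lines. *)

Section right_continuity.
Context {R : realType}.
Implicit Types (G : R -> R) (t : R).

(* For nonincreasing G this is right continuity at t. *)
Definition right_cont_at G t :=
  forall e, 0 < e -> exists2 r, 0 < r & G t - e < G (t + r).

Lemma not_right_cont_at_gap G t : ~ right_cont_at G t ->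
  exists q : rat, ratr q < G t /\ forall r, 0 < r -> G (t + r) < ratr q.
Proof.
move=> /existsNP[e /not_implyP[e0 /forall2NP Ge]].
have /rat_in_itvoo[q] : G t - e < G t by rewrite ltrBlDr ltrDl.
rewrite in_itv /= => /andP[Geq qG]; exists q; split => // r r0.
have [//|/negP] := Ge r; rewrite -leNgt => /le_lt_trans; exact.
Qed.

Lemma countable_not_right_cont_at G : countable [set t | ~ right_cont_at G t].
Proof.
have /choice[q qP] : forall t, exists q : rat, ~ right_cont_at G t ->
    ratr q < G t /\ forall r, 0 < r -> G (t + r) < ratr q.
  move=> t; have [rc|/not_right_cont_at_gap[q ?]] := pselect (right_cont_at G t).
    by exists 0.
  by exists q.
have q_decr a b : ~ right_cont_at G a -> ~ right_cont_at G b -> a < b ->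
    ratr (q b) < ratr (q a) :> R.
  move=> na nb ab; have [qbG _] := qP b nb; have [_ Gqa] := qP a na.
  by apply: lt_trans qbG _; have := Gqa (b - a); rewrite subr_gt0 subrKC; apply.
apply/countable_injP; exists (pickle \o q) => a b.
rewrite !inE => na nb /(pcan_inj pickleK) qab.
case: (ltgtP a b) => // ab.
- by have := q_decr a b na nb ab; rewrite qab ltxx.
- by have := q_decr b a nb na ab; rewrite qab ltxx.
Qed.

Lemma ae_right_cont_at G : {ae @lebesgue_measure R, forall t, right_cont_at G t}.
Proof.
exists [set t | ~ right_cont_at G t]; split => //.
- apply: countable_measurable; last exact: countable_not_right_cont_at.
  exact: measurable_set1.
- exact/countable_lebesgue_measure0/countable_not_right_cont_at.
Qed.

End right_continuity.

Section measurable_sets.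
Context {d : measure_display} {T : measurableType d} {R : realType}.
Implicit Types (f g : T -> R).

Lemma measurable_set_le f g : measurable_fun setT f -> measurable_fun setT g ->
  measurable [set w | f w <= g w].
Proof.
by move=> mf mg; have := measurable_fun_le measurableT mf mg; rewrite setTI.
Qed.

Lemma measurable_superlevel f t : measurable_fun setT f ->
  measurable [set w | t <= f w].
Proof. exact/measurable_set_le/measurable_cst. Qed.

Lemma measurable_cvg_set (fs : nat -> T -> R) f :
  (forall n, measurable_fun setT (fs n)) -> measurable_fun setT f ->
  measurable [set w | fs n w @[n --> \oo] --> f w].
Proof.
move=> mfs mf.
rewrite (_ : [set w | _] = \bigcap_k \bigcup_N \bigcap_m
   [set w | `|f w - fs (N + m)%N w| <= k.+1%:R^-1]); last first.
  apply/seteqP; split => w /=.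
    move=> /cvgrPdist_le fs_f k _.
    have [N _ fsN] := fs_f k.+1%:R^-1 ltac:(by rewrite invr_gt0).
    by exists N => // m _; apply: fsN; rewrite /= leq_addr.
  move=> fs_f; apply/cvgrPdist_le => e e0.
  have [k _ ke] := near_infty_natSinv_lt (PosNum e0).
  have [N _ fsN] := fs_f k I.
  exists N => // n /= Nn; have := fsN (n - N)%N I; rewrite subnKC //.
  by move/le_trans; apply; apply/ltW/ke => /=.
apply: bigcapT_measurable => k; apply: bigcupT_measurable => N.
apply: bigcapT_measurable => m; apply: measurable_set_le => //.
by apply: measurableT_comp => //; exact: measurable_funB.
Qed.

End measurable_sets.

Section capacity.
Context {d : measure_display} {T : measurableType d} {R : realType}.
Variable mu : set T -> R.
Hypothesis mu_cap : is_capacity mu.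
Implicit Types (A B : set T) (f g : T -> R).

Lemma cap0 : mu set0 = 0.
Proof. by case: mu_cap. Qed.

Lemma cap_ge0 A : measurable A -> 0 <= mu A.
Proof. by case: mu_cap => _ _ mu01 _ /mu01/andP[ge0 _]. Qed.

Lemma cap_le1 A : measurable A -> mu A <= 1.
Proof. by case: mu_cap => _ _ mu01 _ /mu01/andP[_ le1]. Qed.

Lemma le_cap A B : measurable A -> measurable B -> A `<=` B -> mu A <= mu B.
Proof. by case: mu_cap => _ _ _; apply. Qed.

Definition survival f t := mu [set w | t <= f w].

Lemma survival_ge0 f t : measurable_fun setT f -> 0 <= survival f t.
Proof. by move=> mf; apply/cap_ge0/measurable_superlevel. Qed.

Lemma survival_le1 f t : measurable_fun setT f -> survival f t <= 1.
Proof. by move=> mf; apply/cap_le1/measurable_superlevel. Qed.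

Lemma le_survival f g t : measurable_fun setT f -> measurable_fun setT g ->
  (forall w, f w <= g w) -> survival f t <= survival g t.
Proof.
move=> mf mg fg; apply: le_cap; try exact: measurable_superlevel.
by move=> w /= /le_trans; apply.
Qed.

Lemma survival_nonincr f : measurable_fun setT f -> nonincreasing_fun (survival f).
Proof.
move=> mf s t st; apply: le_cap; try exact: measurable_superlevel.
by move=> w /=; apply: le_trans.
Qed.

Hypothesis mu_sub : cap_subadditive mu.

Lemma cap_le_setID A B : measurable A -> measurable B ->
  mu A <= mu (A `&` B) + mu (A `\` B).
Proof.
move=> mA mB; rewrite -[X in mu X <= _](setUIDK A B).
apply: mu_sub; [exact: measurableI|exact: measurableD|].
by apply/seteqP; split => x // [[_ Bx] [_ nBx]].
Qed.

Lemma cap_setI_conull A B : measurable A -> measurable B -> mu (~` B) = 0 ->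
  mu (A `&` B) = mu A.
Proof.
move=> mA mB B0; apply/eqP; rewrite eq_le le_cap ?subIsetl //=; last first.
  exact: measurableI.
have AB0 : mu (A `\` B) = 0.
  apply/eqP; rewrite eq_le cap_ge0 ?andbT; last exact: measurableD.
  by rewrite -B0 le_cap //; [exact: measurableD|exact: measurableC].
by have := cap_le_setID A B mA mB; rewrite AB0 addr0.
Qed.

Hypothesis mu_cfa : cap_cont_from_above mu.

Variables (Xs : nat -> T -> R) (X : T -> R).
Hypotheses (mXs : forall n, measurable_fun setT (Xs n))
  (mX : measurable_fun setT X).
Let C := [set w | Xs n w @[n --> \oo] --> X w].
Hypothesis C_conull : mu (~` C) = 0.

Let mC : measurable C. Proof. exact: measurable_cvg_set. Qed.

Lemma near_survival_ub t e : 0 < e ->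
  \forall n \near \oo, survival (Xs n) t < survival X t + e.
Proof.
move=> e0; pose U n := \bigcup_k [set w | t <= Xs (n + k)%N w].
have mU n : measurable (U n).
  by apply: bigcupT_measurable => k; exact: measurable_superlevel.
have U_decr n : U n.+1 `<=` U n.
  by move=> w [k _ tXs]; exists k.+1 => //; rewrite -addSnnS.
have mUoo : measurable (\bigcap_n U n) by exact: bigcapT_measurable.
have UooC : \bigcap_n U n `&` C `<=` [set w | t <= X w].
  move=> w [Uw Cw] /=; rewrite leNgt; apply/negP => Xt.
  have [N _ XsN] := cvgr_lt _ Cw _ Xt.
  have [k _ tXs] := Uw N I.
  by have := XsN (N + k)%N (leq_addr _ _); rewrite ltNge tXs.
have UooX : mu (\bigcap_n U n) <= survival X t.
  rewrite -(cap_setI_conull _ _ mUoo mC C_conull).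
  by apply: le_cap UooC; [exact: measurableI|exact: measurable_superlevel].
have UooXe : mu (\bigcap_n U n) < survival X t + e.
  by rewrite (le_lt_trans UooX) ?ltrDl.
apply: filterS (cvgr_lt _ (mu_cfa U mU U_decr) _ UooXe) => n.
apply: le_lt_trans; apply: le_cap => //; first exact: measurable_superlevel.
by move=> w tXs; exists 0%N => //; rewrite addn0.
Qed.

(* Only [t < X w] forces [t <= Xs n w] for all large n; right continuity
   bridges the gap between [t < X w] and [t <= X w]. *)
Lemma near_survival_lb t e : right_cont_at (survival X) t -> 0 < e ->
  \forall n \near \oo, survival X t - e < survival (Xs n) t.
Proof.
move=> rcX e0; have [r r0 Xr] := rcX (e / 2) ltac:(by rewrite divr_gt0).
pose A := [set w | t + r <= X w] `&` C.
have mA : measurable A by apply: measurableI => //; exact: measurable_superlevel.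
pose V n := \bigcap_k [set w | t <= Xs (n + k)%N w].
have mV n : measurable (V n).
  by apply: bigcapT_measurable => k; exact: measurable_superlevel.
pose W n := A `\` V n.
have mW n : measurable (W n) by exact: measurableD.
have W_decr n : W n.+1 `<=` W n.
  move=> w [Aw nVw]; split => // Vw; apply: nVw => k _ /=.
  by rewrite addSnnS; exact: Vw.
have W0 : \bigcap_n W n = set0.
  apply/seteqP; split => w // Ww; have [[rX Cw] _] := Ww 0%N I.
  have tX : t < X w by apply: lt_le_trans rX; rewrite ltrDl.
  have [N _ XsN] := cvgr_gt _ Cw t tX.
  have [_ nVw] := Ww N I; apply: nVw => k _ /=.
  by apply/ltW/XsN; rewrite /= leq_addr.
have AX : mu A = survival X (t + r).
  by apply: cap_setI_conull => //; exact: measurable_superlevel.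
have Woo : mu (\bigcap_n W n) < e / 2 by rewrite W0 cap0 divr_gt0.
apply: filterS (cvgr_lt _ (mu_cfa W mW W_decr) _ Woo) => n Wn.
have : mu A <= survival (Xs n) t + mu (W n).
  apply: le_trans (cap_le_setID _ _ mA (mV n)) _; rewrite lerD2r.
  apply: le_cap => //; [exact: measurableI|exact: measurable_superlevel|].
  by move=> w [_ Vw]; have := Vw 0%N I; rewrite addn0.
lra.
Qed.

Lemma cvg_survival t : right_cont_at (survival X) t ->
  survival (Xs n) t @[n --> \oo] --> survival X t.
Proof.
move=> rcX; apply/cvgrPdist_lt => e e0.
apply: filterS2 (near_survival_lb t e rcX e0) (near_survival_ub t e e0).
by move=> n lb ub; rewrite ltr_distlC lb ub.
Qed.

Lemma cvg_integral_survival (D : set R) (phi : R -> R) (B : T -> R) :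
  measurable D -> continuous phi -> nondecreasing_fun phi ->
  measurable_fun setT B ->
  (\int[lebesgue_measure]_(t in D) (phi (survival B t))%:E)%E \is a fin_num ->
  (forall n t, D t -> `|phi (survival (Xs n) t)| <= `|phi (survival B t)|) ->
  (\int[lebesgue_measure]_(t in D) (phi (survival X t))%:E)%E \is a fin_num /\
  (\int[lebesgue_measure]_(t in D) (phi (survival (Xs n) t))%:E)%E @[n --> \oo]
    --> (\int[lebesgue_measure]_(t in D) (phi (survival X t))%:E)%E.
Proof.
move=> mD phi_cont phi_nd mB finB dom.
have m_phi f : measurable_fun setT f ->
    measurable_fun D (fun t => (phi (survival f t))%:E).
  move=> mf; apply/measurable_EFinP; apply: nonincreasing_measurable mD _.
  by move=> s t st; apply/phi_nd/survival_nonincr.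
have intB : (@lebesgue_measure R).-integrable D (fun t => (phi (survival B t))%:E).
  apply/integrableP; split; first exact: m_phi.
  by rewrite integral_fin_num_abs //; apply/measurable_EFinP; exact: m_phi.
have ae_cvg : {ae @lebesgue_measure R, forall t, D t ->
    (fun n => (phi (survival (Xs n) t))%:E) @ \oo --> (phi (survival X t))%:E}.
  have [N [mN N0 rcN]] := ae_right_cont_at (survival X).
  exists N; split => // t /= ncvg; apply: rcN => rcX; apply: ncvg => _.
  apply: cvg_EFin; first exact: nearW.
  exact: cvg_comp (cvg_survival _ rcX) (phi_cont _).
have ae_dom : {ae @lebesgue_measure R, forall t n, D t ->
    `|(phi (survival (Xs n) t))%:E| <= (abse \o (fun t => (phi (survival B t))%:E)) t}%E.
  by apply: aeW => t n Dt; rewrite /= lee_fin dom.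
have [intX _ cvgXs] := @dominated_convergence _ _ _ (@lebesgue_measure R) _ mD
  _ _ _ (fun n => m_phi _ (mXs n)) (m_phi _ mX) ae_cvg (integrable_abse intB) ae_dom.
by split => //; exact: integrable_fin_num.
Qed.

End capacity.

Theorem lemma3 (d : measure_display) (T : measurableType d) (R : realType)
  (mu : set T -> R) (Xs : nat -> T -> R) (X Y Z : T -> R) :
  is_capacity mu -> cap_subadditive mu -> cap_cont_from_above mu ->
  (forall n, measurable_fun setT (Xs n)) ->
  measurable_fun setT X -> measurable_fun setT Y -> measurable_fun setT Z ->
  (forall n w, Y w <= Xs n w /\ Xs n w <= Z w) ->
  choquet mu Y \is a fin_num -> choquet mu Z \is a fin_num ->
  conj_cap mu [set w | Xs n w @[n --> \oo] --> X w] = 1 ->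
  choquet mu (Xs n) @[n --> \oo] --> choquet mu X.
Proof.
move=> mu_cap mu_sub mu_cfa mXs mX mY mZ XsYZ finY finZ conv1.
have C_conull : mu (~` [set w | Xs n w @[n --> \oo] --> X w]) = 0.
  by move: conv1; rewrite /conj_cap; lra.
have cvg_survival_integral :=
  @cvg_integral_survival _ _ _ mu mu_cap mu_sub mu_cfa _ _ mXs mX C_conull.
move: finY finZ; rewrite /choquet fin_numD => /andP[_ finYneg].
rewrite fin_numD => /andP[finZpos _].
have dom_pos n t : `|survival mu (Xs n) t| <= `|survival mu Z t|.
  rewrite !ger0_norm ?survival_ge0 // le_survival // => w.
  by case: (XsYZ n w).
have dom_neg n t : `|survival mu (Xs n) t - 1| <= `|survival mu Y t - 1|.
  rewrite !ler0_norm ?subr_le0 ?survival_le1 // lerN2 lerD2r le_survival // => w.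
  by case: (XsYZ n w).
have [finXpos cvg_pos] := cvg_survival_integral _ id _ (measurable_itv `[0, +oo[)
  (fun=> cvg_id) (fun _ _ => id) mZ finZpos (fun n t _ => dom_pos n t).
have [_ cvg_neg] := cvg_survival_integral _ (fun x => x - 1) _ (measurable_itv `]-oo, 0[)
  (fun=> cvgB cvg_id (cvg_cst (1 : R))) (fun _ _ xy => lerD xy (lexx _)) mY finYneg
  (fun n t _ => dom_neg n t).
exact: cvgeD (fin_num_adde_defr _ finXpos) cvg_pos cvg_neg.
Qed.
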